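(* Let $V$ be a population of $n$ individuals with pseudo-metric $d$, let $k$ be a panel size, and let $\mathcal{G}$ be the output of the Greedy Capture procedure (defined in the context) on $V$ with panel size $k$. Let $\alpha\ge 1$ and let $P\subseteq V$ be such that for every $G\in\mathcal{G}$ there exists $p\in P$ with $d(p,c_G)\le\alpha\cdot r_G$. Then $P$ satisfies $(\alpha+3)$-PFC for population $V$ with panel size $k$.
   Context: $B(x,\delta)=\{u\in V: d(x,u)\le\delta\}$. Greedy Capture with panel size $K$ (Modified Greedy Capture with every individual initially its own group): maintain a set $U$ of uncovered individuals, initially $V$, and an output collection initially empty; increase $\delta$ continuously from $0$ while $U\ne\emptyset$. At each $\delta$: for each already formed group with center $c$, remove $U\cap B(c,\delta)$ from $U$; then, while some $x\in V$ has $|U\cap B(x,\delta)|\ge n/K$, form the group $U\cap B(x,\delta)$ with center $c_G=x$ and radius $r_G=\delta$, add it to the output and remove its members from $U$. A set $P\subseteq V$ satisfies $\gamma$-PFC for population $V$ with panel size $k$ if for every $S\subseteq V$ with $|S|\ge n/k$ there exist $v\in S$, $p\in P$ with $d(v,p)\le\gamma\cdot\min_{y\in V}\max_{u\in S}d(u,y)$. *)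

From HB Require Import structures.
From mathcomp Require Import all_boot all_order all_algebra.
Set Implicit Arguments. Unset Strict Implicit. Unset Printing Implicit Defensive.
Import Order.TTheory GRing.Theory Num.Theory.
Local Open Scope ring_scope.

(* A group formed by Greedy Capture: its member set (at formation),
   its center c_G and its radius r_G. *)
Record group (T : finType) (R : realFieldType) := Group {
  members : {set T};
  center : T;
  radius : R }.

Definition pseudometric (T : finType) (R : realFieldType) (d : T -> T -> R) :=
  [/\ forall x, d x x = 0,
      forall x y, d x y = d y x
    & forall x y z, d x z <= d x y + d y z].

Definition ball (T : finType) (R : realFieldType) (d : T -> T -> R) (x : T) (delta : R)
  : {set T} := [set u | d x u <= delta].

Definition uncovered (T : finType) (R : realFieldType) (d : T -> T -> R)
  (gs : seq (group T R)) (delta : R) : {set T} :=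
  ~: (\bigcup_(g <- gs) (members g :|: ball d (center g) delta)).

Definition thr (T : finType) (R : realFieldType) (K : nat) : R :=
  #|T|%:R / K%:R.

(* gs (in formation order) is a possible output (execution trace) of
   Greedy Capture with panel size K. *)
Definition greedy_capture (T : finType) (R : realFieldType) (d : T -> T -> R)
  (K : nat) (gs : seq (group T R)) : Prop :=
  (forall pre g post, gs = pre ++ g :: post ->
     [/\ 0 <= radius g,
         all (fun g' => radius g' <= radius g) pre,
         members g = uncovered d pre (radius g) :&: ball d (center g) (radius g),
         thr T R K <= #|members g|%:R
       & forall delta, 0 <= delta -> delta < radius g ->
           all (fun g' => radius g' <= delta) pre ->
           forall x, #|uncovered d pre delta :&: ball d x delta|%:R < thr T R K])
  /\
  (forall delta, 0 <= delta -> all (fun g' => radius g' <= delta) gs ->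
     forall x, #|uncovered d gs delta :&: ball d x delta|%:R < thr T R K).

(* max_{u in S} d(u, y)  (distances are nonnegative, S nonempty in use) *)
Definition cost (T : finType) (R : realFieldType) (d : T -> T -> R) (S : {set T}) (y : T) : R :=
  \big[Num.max/0]_(u in S) d u y.

(* min_{y in V} max_{u in S} d(u, y); the seed is itself one of the values
   (the largest), so it does not affect the minimum when T is nonempty. *)
Definition optrad (T : finType) (R : realFieldType) (d : T -> T -> R) (S : {set T}) : R :=
  \big[Num.min/(\big[Num.max/0]_(y : T) cost d S y)]_(y : T) cost d S y.

Definition PFC (T : finType) (R : realFieldType) (d : T -> T -> R)
  (gamma : R) (P : {set T}) (k : nat) : Prop :=
  forall S : {set T}, thr T R k <= #|S|%:R ->
    exists v p, [/\ v \in S, p \in P & d v p <= gamma * optrad d S].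

(** Let y be a centre achieving optrad d S =: r, so S lies in the ball B(y, r).
    Greedy Capture stops opening groups of radius <= r only once every ball of
    radius r holds fewer than n/k uncovered individuals; since |S| >= n/k, some
    u in S is then already covered by a group G with r_G <= r, which puts u
    within r of c_G.  With p in P at distance <= alpha r_G from c_G, the
    triangle inequality gives d(u, p) <= (alpha + 1) r <= (alpha + 3) r. *)

From mathcomp Require Import all_boot all_order all_algebra.
From mathcomp Require Import lra.

Set Implicit Arguments.
Unset Strict Implicit.
Unset Printing Implicit Defensive.

Import Order.TTheory GRing.Theory Num.Theory.
Local Open Scope ring_scope.

Lemma all_or_first_counterexample (A : Type) (q : pred A) (s : seq A) :
  all q s \/ exists pre a post, [/\ s = pre ++ a :: post, all q pre & ~~ q a].
Proof.
elim: s => [|a s [IH | [pre [b [post [-> qpre nqb]]]]]]; first by left.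
- have [qa | nqa] := boolP (q a); first by left; rewrite /= qa.
  by right; exists [::], a, s.
- have [qa | nqa] := boolP (q a); last by right; exists [::], a, (pre ++ b :: post).
  by right; exists (a :: pre), b, post; rewrite /= qa.
Qed.

Lemma mem_bigcup_seq_split (T : finType) (A : Type) (F : A -> {set T})
    (s : seq A) (x : T) :
  x \in \bigcup_(a <- s) F a ->
  exists pre a post, s = pre ++ a :: post /\ x \in F a.
Proof.
elim: s => [|b s IH]; first by rewrite big_nil inE.
rewrite big_cons inE => /orP [xFb | /IH [pre [a [post [-> xFa]]]]].
  by exists [::], b, s.
by exists (b :: pre), a, post.
Qed.

Section Pseudometric.
Variables (T : finType) (R : realFieldType) (d : T -> T -> R).

Lemma cost_ge0 (S : {set T}) (y : T) : 0 <= cost d S y.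
Proof. exact: bigmax_ge_id. Qed.

Lemma le_cost (S : {set T}) (y u : T) : u \in S -> d u y <= cost d S y.
Proof. exact: le_bigmax_cond. Qed.

Lemma sub_ball_cost (S : {set T}) (y : T) :
  pseudometric d -> S \subset ball d y (cost d S y).
Proof.
by move=> [_ dsym _]; apply/subsetP => u uS; rewrite inE dsym le_cost.
Qed.

Lemma optrad_is_cost (S : {set T}) (y0 : T) :
  exists y, optrad d S = cost d S y.
Proof.
exists [arg min_(y < y0) cost d S y]%O.
by apply: bigmin_eq_arg => // y _; apply: le_bigmax.
Qed.

End Pseudometric.

Section GreedyCapture.
Variables (T : finType) (R : realFieldType) (d : T -> T -> R) (K : nat).
Variable gs : seq (group T R).
Hypothesis gcP : greedy_capture d K gs.

Lemma members_sub_ball pre g post :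
  gs = pre ++ g :: post -> members g \subset ball d (center g) (radius g).
Proof.
move=> gsE; have [_ _ -> _ _] := gcP.1 _ _ _ gsE.
by apply/subsetP => u /setIP [].
Qed.

Lemma greedy_capture_sparse_at delta : 0 <= delta ->
  exists pre post, [/\ gs = pre ++ post, all (fun g => radius g <= delta) pre &
    forall x, #|uncovered d pre delta :&: ball d x delta|%:R < thr T R K].
Proof.
move=> delta_ge0.
have [small | [pre [g [post [gsE small nsmall]]]]] :=
  all_or_first_counterexample (fun g => radius g <= delta) gs.
  by exists gs, [::]; rewrite cats0; split=> //; apply: gcP.2.
have [_ _ _ _ stuck] := gcP.1 _ _ _ gsE.
exists pre, (g :: post); split=> //.
by apply: stuck; rewrite // ltNge.
Qed.

Lemma greedy_capture_covers (S : {set T}) (y : T) delta :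
  0 <= delta -> thr T R K <= #|S|%:R -> S \subset ball d y delta ->
  exists u pre g post, [/\ u \in S, gs = pre ++ g :: post,
    radius g <= delta & d (center g) u <= delta].
Proof.
move=> delta_ge0 largeS Sball.
have [pre [post [gsE small few]]] := greedy_capture_sparse_at delta_ge0.
have : ~~ (S \subset uncovered d pre delta :&: ball d y delta).
  apply: contraL (few y) => /subset_leq_card; rewrite -(ler_nat R) => le_card.
  by rewrite -leNgt (le_trans largeS le_card).
case/subsetPn => u uS; rewrite inE (subsetP Sball) // andbT inE negbK.
case/mem_bigcup_seq_split => pre1 [g [post1 [preE ug]]].
have gsE' : gs = pre1 ++ g :: (post1 ++ post) by rewrite gsE preE -catA.
have rg_le : radius g <= delta.
  by move: small; rewrite preE all_cat /= => /and3P [].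
exists u, pre1, g, (post1 ++ post); split=> //.
case/setUP: ug => [/(subsetP (members_sub_ball gsE')) | ]; rewrite inE // => dcu.
exact: le_trans dcu rg_le.
Qed.

End GreedyCapture.

Theorem lemma7 (T : finType) (R : realFieldType) (d : T -> T -> R) (k : nat)
  (gs : seq (group T R)) (alpha : R) (P : {set T}) :
  (0 < #|T|)%N -> (0 < k)%N -> pseudometric d ->
  greedy_capture d k gs ->
  1 <= alpha ->
  (forall pre g post, gs = pre ++ g :: post ->
     exists p, p \in P /\ d p (center g) <= alpha * radius g) ->
  PFC d (alpha + 3) P k.
Proof.
move=> /card_gt0P [y0 _] _ dP gcP alpha_ge1 centersP S largeS.
have [y ->] := optrad_is_cost d S y0.
set r := cost d S y.
have r_ge0 : 0 <= r := cost_ge0 d S y.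
have [u [pre [g [post [uS gsE rg_le dcu]]]]] :=
  greedy_capture_covers gcP r_ge0 largeS (sub_ball_cost S y dP).
have [p [pP dpc]] := centersP _ _ _ gsE.
exists u, p; split=> //.
have [_ dsym dtri] := dP.
have dup : d u p <= d (center g) u + d p (center g).
  by rewrite (dsym (center g)) (dsym p); apply: dtri.
have alpha_rg : alpha * radius g <= alpha * r.
  by rewrite ler_wpM2l // (le_trans ler01 alpha_ge1).
nra.
Qed.
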